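(* Let $x_1,\ldots,x_J \in \mathbb{R}^d$ be given, let $\rho \ge 0$, $\widehat\mu \in \mathbb{R}^d$ and $\widehat\Sigma \in \mathbb{S}_+^d$. Define $\Theta(\{x_j\}) = \{\theta \in \mathbb{R}^d : x_j^\top \theta \ge 0 \ \forall j \in [J]\}$, and let $\mathbb{B}$ be the set of all probability measures $\mathbb{Q}$ on $\mathbb{R}^d$ for which there exists $(\mu,\Sigma) \in \mathbb{R}^d \times \mathbb{S}_+^d$ with $\mathbb{G}((\mu,\Sigma),(\widehat\mu,\widehat\Sigma)) \le \rho$ such that the random vector $\tilde\theta \sim \mathbb{Q}$ has mean $\mu$ and covariance matrix $\Sigma$. Let $U^\star$ be the optimal value of the semidefinite program $$ U^\star = \left\{\begin{array}{cl} \inf & z_0 + \gamma(\rho^2 - \|\widehat\mu\|_2^2 - \mathrm{Tr}(\widehat\Sigma)) + q + \mathrm{Tr}(Q)\\ \text{s.t.} & \gamma \in \mathbb{R}_+,\ z_0 \in \mathbb{R},\ z \in \mathbb{R}^d,\ Z \in \mathbb{S}_+^d,\ q \in \mathbb{R}_+,\ Q \in \mathbb{S}_+^d,\ \lambda \in \mathbb{R}_+^J,\\ & \begin{bmatrix} \gamma I - Z & \gamma\widehat\Sigma^{1/2} \\ \gamma \widehat\Sigma^{1/2} & Q\end{bmatrix} \succeq 0,\quad \begin{bmatrix} \gamma I - Z & \gamma\widehat\mu + z \\ \gamma\widehat\mu^\top + z^\top & q\end{bmatrix} \succeq 0,\\ & \begin{bmatrix} Z & z \\ z^\top & z_0\end{bmatrix}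 \succeq 0,\quad \begin{bmatrix} Z & z \\ z^\top & z_0 - 1\end{bmatrix} \succeq \sum_{j\in[J]} \lambda_j \begin{bmatrix} 0 & \tfrac12 x_j \\ \tfrac12 x_j^\top & 0\end{bmatrix}. \end{array}\right. $$ Then $\sup_{\mathbb{Q}\in\mathbb{B}} \mathbb{Q}(\tilde\theta \in \Theta(\{x_j\})) \le U^\star$.
   Context: $\mathbb{S}^d$ denotes the symmetric $d\times d$ matrices, $\mathbb{S}_+^d$ the positive semidefinite ones, $[J]=\{1,\ldots,J\}$, $I$ the identity matrix. The Gelbrich distance between $(\mu_1,\Sigma_1),(\mu_2,\Sigma_2) \in \mathbb{R}^d\times\mathbb{S}_+^d$ is $$\mathbb{G}((\mu_1,\Sigma_1),(\mu_2,\Sigma_2)) = \sqrt{\|\mu_1-\mu_2\|_2^2 + \mathrm{Tr}\big(\Sigma_1+\Sigma_2 - 2(\Sigma_2^{1/2}\Sigma_1\Sigma_2^{1/2})^{1/2}\big)}.$$ *)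

From HB Require Import structures.
From mathcomp Require Import all_boot all_order all_algebra.
From mathcomp Require Import all_classical all_reals all_analysis.
Set Implicit Arguments. Unset Strict Implicit. Unset Printing Implicit Defensive.
Import Order.TTheory GRing.Theory Num.Theory.
Local Open Scope classical_set_scope.
Local Open Scope ring_scope.

Section Defs.
Variable R : realType.

Definition psd n (A : 'M[R]_n) : Prop :=
  A^T = A /\ forall v : 'cV[R]_n, 0 <= (v^T *m A *m v) 0 0.

Definition loewner_ge n (A B : 'M[R]_n) : Prop := psd (A - B).

(* principal (PSD) square root: the PSD B with B B = A (unique when A is PSD);
   0 if none exists *)
Definition sqrtm n (A : 'M[R]_n) : 'M[R]_n :=
  xget 0 [set B | psd B /\ B *m B = A].

Definition sqnorm n (v : 'cV[R]_n) : R := \sum_i (v i 0) ^+ 2.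

Definition gelbrich n (m1 : 'cV[R]_n) (S1 : 'M[R]_n) (m2 : 'cV[R]_n) (S2 : 'M[R]_n) : R :=
  Num.sqrt (sqnorm (m1 - m2) +
            \tr (S1 + S2 - 2%:R *: sqrtm (sqrtm S2 *m S1 *m sqrtm S2))).

(* R^d is modelled as d.-tuple R with the product Borel sigma-algebra *)
Definition vec d (t : d.-tuple R) : 'cV[R]_d := \col_i tnth t i.

Definition has_mean_cov d (P : probability (d.-tuple R) R)
    (mu : 'cV[R]_d) (Sigma : 'M[R]_d) : Prop :=
  (forall i : 'I_d,
     P.-integrable setT (fun t => (tnth t i)%:E) /\
     (\int[P]_t (tnth t i)%:E = (mu i 0)%:E)%E) /\
  (forall i j : 'I_d,
     P.-integrable setT (fun t => ((tnth t i - mu i 0) * (tnth t j - mu j 0))%:E) /\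
     (\int[P]_t ((tnth t i - mu i 0) * (tnth t j - mu j 0))%:E = (Sigma i j)%:E)%E).

Definition gelbrich_ball d (rho : R) (muh : 'cV[R]_d) (Sigh : 'M[R]_d)
    : set (probability (d.-tuple R) R) :=
  [set P | exists (mu : 'cV[R]_d) (Sigma : 'M[R]_d),
      psd Sigma /\ gelbrich mu Sigma muh Sigh <= rho /\ has_mean_cov P mu Sigma].

Definition Theta d J (x : 'I_J -> 'cV[R]_d) : set (d.-tuple R) :=
  [set t | forall j : 'I_J, 0 <= ((x j)^T *m vec t) 0 0].

Definition sdp_feasible d J (x : 'I_J -> 'cV[R]_d) (muh : 'cV[R]_d) (Sigh : 'M[R]_d)
    (gamma z0 : R) (z : 'cV[R]_d) (Z : 'M[R]_d) (q : R) (Q : 'M[R]_d)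
    (lambda : 'I_J -> R) : Prop :=
  0 <= gamma /\ psd Z /\ 0 <= q /\ psd Q /\ (forall j, 0 <= lambda j) /\
   psd (block_mx (gamma%:M - Z) (gamma *: sqrtm Sigh)
                 (gamma *: sqrtm Sigh) Q) /\
   psd (block_mx (gamma%:M - Z) (gamma *: muh + z)
                 (gamma *: muh^T + z^T) (q%:M : 'M[R]_1)) /\
   psd (block_mx Z z z^T (z0%:M : 'M[R]_1)) /\
   loewner_ge (block_mx Z z z^T ((z0 - 1)%:M : 'M[R]_1))
     (\sum_(j < J) lambda j *:
        block_mx (0 : 'M[R]_d) ((2%:R)^-1 *: x j)
                 ((2%:R)^-1 *: (x j)^T) (0 : 'M[R]_1)).

Definition sdp_objective d (rho : R) (muh : 'cV[R]_d) (Sigh : 'M[R]_d)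
    (gamma z0 q : R) (Q : 'M[R]_d) : R :=
  z0 + gamma * (rho ^+ 2 - sqnorm muh - \tr Sigh) + q + \tr Q.

(* optimal value U* (in the extended reals; +oo if infeasible) *)
Definition Ustar d J (x : 'I_J -> 'cV[R]_d) (rho : R) (muh : 'cV[R]_d)
    (Sigh : 'M[R]_d) : \bar R :=
  ereal_inf [set r : \bar R | exists (gamma z0 : R) (z : 'cV[R]_d) (Z : 'M[R]_d)
     (q : R) (Q : 'M[R]_d) (lambda : 'I_J -> R),
     sdp_feasible x muh Sigh gamma z0 z Z q Q lambda /\
     r = (sdp_objective rho muh Sigh gamma z0 q Q)%:E].

End Defs.

(** For a feasible point of the SDP, the quadratic [f(θ) = θᵀZθ + 2zᵀθ + z₀] is
    nonnegative by the third LMI and, by the fourth (an S-lemma certificate with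
    multipliers [λ]), at least [1] on [Θ].  Hence [Q(Θ) <= E_Q f = Tr(ZΣ) + f(μ)]
    whenever [Q] has mean [μ] and covariance [Σ].  The first two LMIs bound this
    moment expression.  Tested against [(μ, -1)] the second one gives
    [μᵀZμ + 2zᵀμ <= γ‖μ‖² - 2γ μ̂ᵀμ + q].  Tested against [(K, -I)] with
    [K = Σ Ŝ (T + εI)⁻¹], where [Ŝ = Σ̂^{1/2}] and [T = (Ŝ Σ Ŝ)^{1/2}], the first
    one gives [Tr(ZΣ) <= γ Tr Σ + Tr Q - 2γ Tr T + O(ε)], because [Σ ⪰ K Kᵀ]
    and [Tr(Ŝ K) = Tr(T² (T + εI)⁻¹) >= Tr T - dε].  Summing and using the
    Gelbrich constraint [‖μ - μ̂‖² + Tr(Σ + Σ̂ - 2T) <= ρ²] bounds [Tr(ZΣ) + f(μ)]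
    by the SDP objective. *)

From HB Require Import structures.
From mathcomp Require Import all_boot all_order all_algebra.
From mathcomp Require Import all_classical all_reals all_analysis.
From mathcomp Require Import measurable_realfun ring lra.
Import Order.TTheory GRing.Theory Num.Theory.
Set Implicit Arguments. Unset Strict Implicit. Unset Printing Implicit Defensive.
Local Open Scope ring_scope.

Section BilinearForm.
Variable R : comRingType.

Definition bil m n (A : 'M[R]_(m, n)) (v : 'cV[R]_m) (w : 'cV[R]_n) : R :=
  (v^T *m A *m w) 0 0.

Lemma bilDl m n (A : 'M[R]_(m, n)) u v w : bil A (u + v) w = bil A u w + bil A v w.
Proof. by rewrite /bil linearD /= !mulmxDl mxE. Qed.

Lemma bilDr m n (A : 'M[R]_(m, n)) u v w : bil A w (u + v) = bil A w u + bil A w v.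
Proof. by rewrite /bil mulmxDr mxE. Qed.

Lemma bilZl m n (A : 'M[R]_(m, n)) t v w : bil A (t *: v) w = t * bil A v w.
Proof. by rewrite /bil linearZ /= -!scalemxAl mxE. Qed.

Lemma bilZr m n (A : 'M[R]_(m, n)) t v w : bil A v (t *: w) = t * bil A v w.
Proof. by rewrite /bil -scalemxAr mxE. Qed.

Lemma bilNl m n (A : 'M[R]_(m, n)) v w : bil A (- v) w = - bil A v w.
Proof. by rewrite -scaleN1r bilZl mulN1r. Qed.

Lemma bilNr m n (A : 'M[R]_(m, n)) v w : bil A v (- w) = - bil A v w.
Proof. by rewrite -scaleN1r bilZr mulN1r. Qed.

Lemma bil0l m n (A : 'M[R]_(m, n)) w : bil A 0 w = 0.
Proof. by rewrite /bil linear0 !mul0mx mxE. Qed.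

Lemma bil0r m n (A : 'M[R]_(m, n)) v : bil A v 0 = 0.
Proof. by rewrite /bil mulmx0 mxE. Qed.

Lemma bil0m m n (v : 'cV[R]_m) (w : 'cV[R]_n) : bil 0 v w = 0.
Proof. by rewrite /bil mulmx0 mul0mx mxE. Qed.

Lemma bilDm m n (A B : 'M[R]_(m, n)) v w : bil (A + B) v w = bil A v w + bil B v w.
Proof. by rewrite /bil mulmxDr mulmxDl mxE. Qed.

Lemma bilNm m n (A : 'M[R]_(m, n)) v w : bil (- A) v w = - bil A v w.
Proof. by rewrite /bil mulmxN mulNmx mxE. Qed.

Lemma bilZm m n (A : 'M[R]_(m, n)) t v w : bil (t *: A) v w = t * bil A v w.
Proof. by rewrite /bil -scalemxAr -scalemxAl mxE. Qed.

Lemma bil_sum I (r : seq I) (P : pred I) m n (F : I -> 'M[R]_(m, n)) v w :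
  bil (\sum_(j <- r | P j) F j) v w = \sum_(j <- r | P j) bil (F j) v w.
Proof.
by apply: (big_morph (fun A => bil A v w)) => [A B|]; [exact: bilDm | exact: bil0m].
Qed.

Lemma bil1m n (v w : 'cV[R]_n) : bil 1%:M v w = (v^T *m w) 0 0.
Proof. by rewrite /bil mulmx1. Qed.

Lemma bil_scalar (c : R) : bil c%:M 1%:M 1%:M = c.
Proof. by rewrite /bil trmx1 mul1mx mulmx1 mxE eqxx mulr1n. Qed.

Lemma bil_col1 n (b : 'cV[R]_n) v : bil b v 1%:M = (v^T *m b) 0 0.
Proof. by rewrite /bil mulmx1. Qed.

Lemma bil_row1 n (b : 'rV[R]_n) v : bil b 1%:M v = (b *m v) 0 0.
Proof. by rewrite /bil trmx1 mul1mx. Qed.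

Lemma dotC n (v w : 'cV[R]_n) : (v^T *m w) 0 0 = (w^T *m v) 0 0.
Proof. by rewrite -[w^T *m v]trmxK trmx_mul !trmxK [RHS]mxE. Qed.

Lemma bilC n (A : 'M[R]_n) v w : A^T = A -> bil A v w = bil A w v.
Proof. by move=> sA; rewrite /bil -mulmxA dotC trmx_mul sA. Qed.

Lemma bilMl n (A B : 'M[R]_n) v w : bil (A *m B) v w = bil B (A^T *m v) w.
Proof. by rewrite /bil trmx_mul trmxK !mulmxA. Qed.

Lemma bilMr n (A B : 'M[R]_n) v w : bil (A *m B) v w = bil A v (B *m w).
Proof. by rewrite /bil !mulmxA. Qed.

Lemma bil_delta n (A : 'M[R]_n) i j : bil A (delta_mx i 0) (delta_mx j 0) = A i j.
Proof. by rewrite /bil trmx_delta -rowE -colE !mxE. Qed.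

Lemma bil_outer n (v w : 'cV[R]_n) : bil (v *m v^T) w w = ((v^T *m w) 0 0) ^+ 2.
Proof. by rewrite /bil !mulmxA -(mulmxA (w^T *m v)) mxE big_ord1 dotC expr2. Qed.

Lemma bil_entries m n (A : 'M[R]_(m, n)) v w :
  bil A v w = \sum_i \sum_j A i j * (v i 0 * w j 0).
Proof.
rewrite /bil mxE exchange_big /=; apply: eq_bigr => i _; rewrite mxE big_distrl /=.
by apply: eq_bigr => j _; rewrite !mxE mulrCA mulrA.
Qed.

Lemma bil_block n1 n2 (A : 'M[R]_n1) (B : 'M[R]_(n1, n2)) (C : 'M[R]_(n2, n1))
    (D : 'M[R]_n2) v1 v2 w1 w2 :
  bil (block_mx A B C D) (col_mx v1 v2) (col_mx w1 w2) =
  bil A v1 w1 + bil B v1 w2 + bil C v2 w1 + bil D v2 w2.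
Proof.
by rewrite /bil tr_col_mx mul_row_block mul_row_col !mulmxDl !mxE addrACA !addrA.
Qed.

Lemma mxtrace_quad n m (A : 'M[R]_n) (F : 'M[R]_(n, m)) :
  \tr (F^T *m A *m F) = \sum_i bil A (col i F) (col i F).
Proof.
apply: eq_bigr => i _; rewrite /bil tr_col -row_mul !mxE.
by apply: eq_bigr => k _; rewrite !mxE.
Qed.

Lemma mxtrace11 (X : 'M[R]_1) : \tr X = X 0 0.
Proof. by rewrite /mxtrace big_ord1. Qed.

End BilinearForm.

Section PositiveSemidefinite.
Variable R : realType.

Lemma psd_trmx n (A : 'M[R]_n) : psd A -> A^T = A.
Proof. by case. Qed.

Lemma psd_sym n (A : 'M[R]_n) i j : psd A -> A j i = A i j.
Proof. by case=> sA _; rewrite -[in RHS]sA mxE. Qed.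

Lemma psd_bil_ge0 n (A : 'M[R]_n) v : psd A -> 0 <= bil A v v.
Proof. by case=> _ /(_ v). Qed.

Lemma psd_diag_ge0 n (A : 'M[R]_n) i : psd A -> 0 <= A i i.
Proof. by rewrite -bil_delta; exact: psd_bil_ge0. Qed.

Lemma psd_mxtrace_ge0 n (A : 'M[R]_n) : psd A -> 0 <= \tr A.
Proof. by move=> pA; apply: sumr_ge0 => i _; exact: psd_diag_ge0. Qed.

Lemma psd_mxtrace_quad_ge0 n m (A : 'M[R]_n) (F : 'M[R]_(n, m)) :
  psd A -> 0 <= \tr (F^T *m A *m F).
Proof. by move=> pA; rewrite mxtrace_quad; apply: sumr_ge0 => i _; exact: psd_bil_ge0. Qed.

Lemma dot_ge0 n (v : 'cV[R]_n) : 0 <= (v^T *m v) 0 0.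
Proof. by rewrite mxE; apply: sumr_ge0 => i _; rewrite mxE -expr2 sqr_ge0. Qed.

Lemma dot_eq0 n (v : 'cV[R]_n) : (v^T *m v) 0 0 = 0 -> v = 0.
Proof.
rewrite mxE => /eqP; rewrite psumr_eq0 => [/allP v0|i _]; last by rewrite !mxE -expr2 sqr_ge0.
apply/matrixP => i j; rewrite (ord1 j) !mxE.
by have := v0 i (mem_index_enum _); rewrite !mxE -expr2 sqrf_eq0 => /eqP.
Qed.

Lemma psd_diag_eq0 n (A : 'M[R]_n) : psd A -> (forall i, A i i = 0) -> A = 0.
Proof.
move=> pA A0; apply/matrixP => i j; rewrite mxE.
have := psd_bil_ge0 (- A i j *: delta_mx i 0 + delta_mx j 0) pA.
rewrite !(bilDl, bilDr, bilZl, bilZr) !bil_delta !A0 (psd_sym i j pA).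
by move=> ?; nra.
Qed.

Lemma psd_block_ul n1 n2 (A : 'M[R]_n1) B C (D : 'M[R]_n2) :
  psd (block_mx A B C D) -> psd A.
Proof.
case; rewrite tr_block_mx => /eq_block_mx[sA _ _ _] pM.
split=> // v; have := pM (col_mx v 0).
by rewrite -/(bil _ _ _) bil_block !bil0r !bil0l !addr0.
Qed.

Lemma psd_block_dr n1 n2 (A : 'M[R]_n1) B C (D : 'M[R]_n2) :
  psd (block_mx A B C D) -> psd D.
Proof.
case; rewrite tr_block_mx => /eq_block_mx[_ _ _ sD] pM.
split=> // v; have := pM (col_mx 0 v).
by rewrite -/(bil _ _ _) bil_block !bil0r !bil0l !add0r.
Qed.

Lemma mxtrace_mul_outer n (A : 'M[R]_n) v : \tr (A *m (v *m v^T)) = bil A v v.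
Proof. by rewrite mulmxA mxtrace_mulC mulmxA /mxtrace big_ord1. Qed.

Lemma psd_sub_outer_col n (P : 'M[R]_n) i : psd P -> 0 < P i i ->
  psd (P - (P i i)^-1 *: (col i P *m (col i P)^T)).
Proof.
move=> pP c0; set c := P i i; set v := col i P.
have vE w : (v^T *m w) 0 0 = bil P (delta_mx i 0) w.
  by rewrite /v colE /bil trmx_mul psd_trmx.
split=> [|w]; first by rewrite linearB /= linearZ /= trmx_mul trmxK psd_trmx.
rewrite -/(bil _ _ _) bilDm bilNm bilZm bil_outer vE.
set s := bil P (delta_mx i 0) w.
have := psd_bil_ge0 (w - (s / c) *: delta_mx i 0) pP.
rewrite !(bilDl, bilDr, bilNl, bilNr, bilZl, bilZr) bil_delta -/c.
rewrite (bilC w (delta_mx i 0) (psd_trmx pP)) -/s.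
have sc : s / c * c = s by rewrite mulfVK // gt_eqF.
have -> : c^-1 * s ^+ 2 = s / c * s by rewrite mulrC expr2 mulrAC.
by rewrite sc; lra.
Qed.

Lemma mxtrace_mul_psd_ge0 n (A P : 'M[R]_n) : psd A -> psd P -> 0 <= \tr (A *m P).
Proof.
(* Peeling off [col i P (col i P)ᵀ / P i i] keeps [P] PSD and kills one more
   diagonal entry. *)
move=> pA; have [k] := ubnP #|[set i | P i i != 0]|.
elim: k P => // k IH P hk pP.
have [i /= Pii | P0] := pickP (fun i => P i i != 0); last first.
  by rewrite (psd_diag_eq0 pP) ?mulmx0 ?mxtrace0 // => i; apply/eqP/negbFE/P0.
have c0 : 0 < P i i by rewrite lt_def Pii psd_diag_ge0.
pose P' := P - (P i i)^-1 *: (col i P *m (col i P)^T).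
have pP' : psd P' := psd_sub_outer_col pP c0.
have P'E j : P' j j = P j j - (P i i)^-1 * P j i ^+ 2.
  by rewrite !mxE big_ord1 !mxE expr2.
have supp_lt : (#|[set j | P' j j != 0%R]| < #|[set j | P j j != 0%R]|)%N.
  apply: proper_card; apply/properP; split.
    apply/fintype.subsetP => j; rewrite !inE; apply: contraNN => /eqP Pjj.
    apply/eqP/le_anti; rewrite psd_diag_ge0 // andbT P'E Pjj sub0r oppr_le0.
    by rewrite mulr_ge0 ?sqr_ge0 // invr_ge0 ltW.
  exists i; rewrite !inE // P'E negbK expr2 mulrA mulVf ?mul1r ?subrr //.
have -> : P = P' + (P i i)^-1 *: (col i P *m (col i P)^T) by rewrite subrK.
rewrite mulmxDr mxtraceD -scalemxAr mxtraceZ mxtrace_mul_outer.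
apply: addr_ge0; first by apply: IH => //; exact: leq_trans supp_lt _.
by apply: mulr_ge0; [rewrite invr_ge0 ltW | exact: psd_bil_ge0].
Qed.

End PositiveSemidefinite.

Section Resolvent.
Variables (R : realType) (n : nat) (T : 'M[R]_n) (e : R).
Hypotheses (pT : psd T) (e_gt0 : 0 < e).

Let Y := invmx (T + e%:M).

Lemma psd_add_scalar : psd (T + e%:M).
Proof.
split=> [|w]; first by rewrite linearD /= psd_trmx // tr_scalar_mx.
rewrite -/(bil _ _ _) bilDm -scalemx1 bilZm bil1m.
by rewrite addr_ge0 ?psd_bil_ge0 ?mulr_ge0 ?dot_ge0 ?ltW.
Qed.

Lemma unitmx_add_scalar : T + e%:M \in unitmx.
Proof.
rewrite unitmxE unitfE; apply/negP => /det0P [v v0 hv].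
have /dot_eq0 /(congr1 trmx) : ((v^T)^T *m v^T) 0 0 = 0.
  have : bil (T + e%:M) v^T v^T = 0 by rewrite /bil trmxK hv mul0mx mxE.
  rewrite bilDm -scalemx1 bilZm bil1m => /eqP.
  have et_ge0 : 0 <= e * ((v^T)^T *m v^T) 0 0 by rewrite mulr_ge0 ?dot_ge0 ?ltW.
  have b_ge0 := psd_bil_ge0 v^T pT.
  by rewrite paddr_eq0 // mulf_eq0 (gt_eqF e_gt0) => /andP[_ /eqP].
by rewrite trmxK linear0 => /eqP; rewrite (negPf v0).
Qed.

Lemma mulmx_resolvent : T *m Y = 1%:M - e *: Y.
Proof.
apply/eqP; rewrite eq_sym subr_eq -mul_scalar_mx -mulmxDl.
by rewrite /Y mulmxV ?unitmx_add_scalar.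
Qed.

Lemma psd_resolvent : psd Y.
Proof.
have sY : Y^T = Y by rewrite /Y trmx_inv (psd_trmx psd_add_scalar).
split=> // v; rewrite -/(bil _ _ _).
have <- : Y *m (T + e%:M) *m Y = Y by rewrite /Y mulVmx ?unitmx_add_scalar // mul1mx.
by rewrite bilMr bilMl sY; exact/psd_bil_ge0/psd_add_scalar.
Qed.

Lemma mxtrace_resolvent : \tr T - e * n%:R <= \tr (T *m T *m Y).
Proof.
have trY := psd_mxtrace_ge0 psd_resolvent.
rewrite -mulmxA mulmx_resolvent mulmxBr mulmx1 -scalemxAr mulmx_resolvent.
rewrite !linearB /= !mxtraceZ mxtrace1.
have := mulr_ge0 (ltW e_gt0) (mulr_ge0 (ltW e_gt0) trY); lra.
Qed.

Lemma bil_resolvent_le u : bil (T *m T) (Y *m u) (Y *m u) <= (u^T *m u) 0 0.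
Proof.
set r := Y *m u.
have -> : u = (T + e%:M) *m r by rewrite /r mulmxA /Y mulmxV ?unitmx_add_scalar // mul1mx.
have sT := psd_trmx pT.
have TT : bil 1%:M (T *m r) (T *m r) = bil (T *m T) r r.
  by rewrite bil1m trmx_mul sT /bil !mulmxA.
have T1 : bil 1%:M (T *m r) r = bil T r r by rewrite bil1m trmx_mul sT.
have T2 : bil 1%:M r (T *m r) = bil T r r by rewrite bil1m /bil mulmxA.
rewrite -bil1m mulmxDl mul_scalar_mx !(bilDl, bilDr, bilZl, bilZr) TT T1 T2.
have := psd_bil_ge0 r pT; have := dot_ge0 r; rewrite -bil1m.
have := ltW e_gt0; nra.
Qed.

End Resolvent.

Section LmiTraceBound.
Variable R : realType.

Lemma loewner_ge_contraction n (Sig W : 'M[R]_n) : psd Sig ->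
  (forall u, bil Sig (W *m u) (W *m u) <= (u^T *m u) 0 0) ->
  loewner_ge Sig (Sig *m W *m (Sig *m W)^T).
Proof.
move=> pSig Wc; have sSig := psd_trmx pSig.
split=> [|v]; first by rewrite linearB /= trmx_mul trmxK sSig.
rewrite -/(bil _ _ _) bilDm bilNm.
set u := (Sig *m W)^T *m v.
have Ku : bil (Sig *m W *m (Sig *m W)^T) v v = (u^T *m u) 0 0.
  by rewrite /bil /u !trmx_mul !trmxK !mulmxA.
have Su : bil Sig v (W *m u) = (u^T *m u) 0 0.
  by rewrite /bil /u !trmx_mul !trmxK !mulmxA.
have := psd_bil_ge0 (v - W *m u) pSig.
rewrite bilDl !bilDr !bilNl !bilNr opprK (bilC (W *m u) v sSig) Su Ku.
by have := Wc u; lra.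
Qed.

Lemma psd_block_mxtrace n m (A : 'M[R]_n) (B : 'M[R]_(n, m)) (D : 'M[R]_m) K :
  psd (block_mx A B B^T D) -> 2 * \tr (B^T *m K) <= \tr (K^T *m A *m K) + \tr D.
Proof.
move=> pM; have := psd_mxtrace_quad_ge0 (col_mx K (- 1%:M)) pM.
rewrite tr_col_mx mul_row_block mul_row_col linearN /= trmx1.
rewrite !mulNmx !mul1mx !mulmxN !mulmx1 mulmxBl !linearD !linearN /=.
have -> : \tr (K^T *m B) = \tr (B^T *m K) by rewrite -mxtrace_tr trmx_mul trmxK.
lra.
Qed.

Lemma lmi_trace_bound_resolvent n (A Q S Sig T : 'M[R]_n) (g e : R) :
  0 <= g -> 0 < e -> psd (block_mx A (g *: S) (g *: S) Q) -> S^T = S ->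
  psd Sig -> psd T -> T *m T = S *m Sig *m S ->
  2 * g * (\tr T - e * n%:R) <= \tr (A *m Sig) + \tr Q.
Proof.
move=> g0 e0 pM sS pSig pT TT.
set Y := invmx (T + e%:M); set W := S *m Y; set K := Sig *m W.
have Wc u : bil Sig (W *m u) (W *m u) <= (u^T *m u) 0 0.
  have -> : bil Sig (W *m u) (W *m u) = bil (T *m T) (Y *m u) (Y *m u).
    by rewrite TT bilMr bilMl sS /W !mulmxA.
  exact: bil_resolvent_le.
have hB : 2 * \tr ((g *: S)^T *m K) <= \tr (K^T *m A *m K) + \tr Q.
  by apply: psd_block_mxtrace; rewrite linearZ /= sS.
have hA : \tr (K^T *m A *m K) <= \tr (A *m Sig).
  have := mxtrace_mul_psd_ge0 (psd_block_ul pM) (loewner_ge_contraction pSig Wc).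
  rewrite mulmxBr linearB /= -/K.
  have -> : \tr (A *m (K *m K^T)) = \tr (K^T *m A *m K).
    by rewrite mulmxA mxtrace_mulC mulmxA.
  lra.
have hS : \tr ((g *: S)^T *m K) = g * \tr (T *m T *m Y).
  by rewrite linearZ /= sS -scalemxAl mxtraceZ TT /K /W !mulmxA.
have := ler_wpM2l g0 (mxtrace_resolvent pT e0); rewrite -/Y.
lra.
Qed.

Lemma sqrtm_sym n (A : 'M[R]_n) : (sqrtm A)^T = sqrtm A.
Proof. by rewrite /sqrtm; case: xgetP => [B _ [[]] | _] //; rewrite trmx0. Qed.

Lemma lmi_trace_bound n (A Q Sigh Sig : 'M[R]_n) (g : R) :
  0 <= g -> psd (block_mx A (g *: sqrtm Sigh) (g *: sqrtm Sigh) Q) -> psd Sig ->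
  2 * g * \tr (sqrtm (sqrtm Sigh *m Sig *m sqrtm Sigh)) <= \tr (A *m Sig) + \tr Q.
Proof.
move=> g0 pM pSig.
rewrite {1}/sqrtm; case: xgetP => [T _ [pT TT] | _]; last first.
  rewrite linear0 mulr0 addr_ge0 ?(mxtrace_mul_psd_ge0 (psd_block_ul pM)) //.
  exact/psd_mxtrace_ge0/(psd_block_dr pM).
apply/ler_addgt0Pr => e e0.
have c_gt0 : 0 < 2 * g * n%:R + 1 by rewrite ltr_pwDr ?mulr_ge0 ?ler0n.
have := lmi_trace_bound_resolvent g0 (divr_gt0 e0 c_gt0) pM (sqrtm_sym Sigh) pSig pT TT.
have : e / (2 * g * n%:R + 1) * (2 * g * n%:R + 1) = e by rewrite mulfVK ?gt_eqF.
have := ltW (divr_gt0 e0 c_gt0); nra.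
Qed.

End LmiTraceBound.

Section QuadraticFunction.
Variables (R : realType) (d : nat).
Implicit Types (Z Sig Q : 'M[R]_d) (z mu v : 'cV[R]_d).

Definition quadf Z z (z0 : R) v : R := bil Z v v + 2 * (z^T *m v) 0 0 + z0.

Lemma bil_block_quadf Z z (c : R) v :
  bil (block_mx Z z z^T (c%:M : 'M[R]_1)) (col_mx v 1%:M) (col_mx v 1%:M) = quadf Z z c v.
Proof. by rewrite bil_block bil_col1 bil_row1 bil_scalar (dotC v z) /quadf; lra. Qed.

Lemma quadf_shift Z z (z0 : R) mu v :
  quadf Z z z0 (mu + v) =
  bil Z v v + ((Z^T *m mu + Z *m mu + 2%:R *: z)^T *m v) 0 0 + quadf Z z z0 mu.
Proof.
have h1 : ((Z^T *m mu)^T *m v) 0 0 = bil Z mu v by rewrite trmx_mul trmxK.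
have h2 : ((Z *m mu)^T *m v) 0 0 = bil Z v mu by rewrite dotC /bil mulmxA.
rewrite /quadf !(bilDl, bilDr) mulmxDr -!bil1m !bilDl bilZl !bil1m h1 h2 mxE.
rewrite mxE; lra.
Qed.

Lemma quadf_ge0 Z z (z0 : R) v :
  psd (block_mx Z z z^T (z0%:M : 'M[R]_1)) -> 0 <= quadf Z z z0 v.
Proof. by move=> pM; rewrite -bil_block_quadf; exact: psd_bil_ge0. Qed.

Lemma quadf_ge1 J (x : 'I_J -> 'cV[R]_d) Z z (z0 : R) (lam : 'I_J -> R) v :
  loewner_ge (block_mx Z z z^T ((z0 - 1)%:M : 'M[R]_1))
    (\sum_(j < J) lam j *: block_mx (0 : 'M[R]_d) ((2%:R)^-1 *: x j)
                                    ((2%:R)^-1 *: (x j)^T) (0 : 'M[R]_1)) ->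
  (forall j, 0 <= lam j) -> (forall j, 0 <= ((x j)^T *m v) 0 0) ->
  1 <= quadf Z z z0 v.
Proof.
move=> pM lam0 xv; have := psd_bil_ge0 (col_mx v 1%:M) pM.
rewrite bilDm bilNm bil_block_quadf bil_sum.
have termE j : bil (lam j *: block_mx 0 ((2%:R)^-1 *: x j) ((2%:R)^-1 *: (x j)^T) 0)
    (col_mx v 1%:M) (col_mx v 1%:M) = lam j * ((x j)^T *m v) 0 0.
  rewrite bilZm bil_block !bil0m !bilZm bil_col1 bil_row1 (dotC v (x j)).
  by field.
rewrite (eq_bigr _ (fun j _ => termE j)) /quadf.
have : 0 <= \sum_(j < J) lam j * ((x j)^T *m v) 0 0.
  by apply: sumr_ge0 => j _; exact: mulr_ge0.
lra.
Qed.

End QuadraticFunction.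

Section ObjectiveBound.
Variables (R : realType) (d : nat).
Implicit Types (Z Sig Q : 'M[R]_d) (z mu v : 'cV[R]_d).

Lemma sqnormE v : sqnorm v = (v^T *m v) 0 0.
Proof. by rewrite /sqnorm mxE; apply: eq_bigr => i _; rewrite mxE expr2. Qed.

Lemma gelbrich_le_sqr mu Sig muh Sigh (rho : R) :
  gelbrich mu Sig muh Sigh <= rho ->
  sqnorm (mu - muh) + \tr (Sig + Sigh - 2%:R *: sqrtm (sqrtm Sigh *m Sig *m sqrtm Sigh))
    <= rho ^+ 2.
Proof.
rewrite /gelbrich; set x := _ + _ => hx.
have [x0|/ltW x0] := leP 0 x; last exact: le_trans x0 (sqr_ge0 rho).
by rewrite -(sqr_sqrtr x0) ler_pXn2r ?nnegrE ?sqrtr_ge0 // (le_trans (sqrtr_ge0 x)).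
Qed.

Lemma moment_le_objective mu Sig muh Sigh Z z Q (rho g z0 q : R) :
  0 <= g -> psd Sig -> gelbrich mu Sig muh Sigh <= rho ->
  psd (block_mx (g%:M - Z) (g *: sqrtm Sigh) (g *: sqrtm Sigh) Q) ->
  psd (block_mx (g%:M - Z) (g *: muh + z) (g *: muh^T + z^T) (q%:M : 'M[R]_1)) ->
  \tr (Z *m Sig) + quadf Z z z0 mu <= sdp_objective rho muh Sigh g z0 q Q.
Proof.
move=> g0 pSig hG B1 B2.
have hT := lmi_trace_bound g0 B1 pSig.
have /(psd_block_mxtrace mu) hM : psd (block_mx (g%:M - Z) (g *: muh + z)
    (g *: muh + z)^T (q%:M : 'M[R]_1)) by rewrite linearD linearZ.
have := ler_wpM2l g0 (gelbrich_le_sqr hG).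
move: hT hM; rewrite /sdp_objective /quadf !mxtrace11 !sqnormE.
rewrite -!bil1m !(bilDl, bilDr, bilNl, bilNr) mulmxBl mul_scalar_mx -/(bil _ mu mu).
rewrite bilDm bilNm -[g%:M]scalemx1 bilZm bilZl (bilC muh mu (trmx1 _ _)).
rewrite mxE eqxx mulr1n.
have -> : \tr (g *: Sig - Z *m Sig) = g * \tr Sig - \tr (Z *m Sig).
  by rewrite linearB /= mxtraceZ.
set T := sqrtm _.
have -> : \tr (Sig + Sigh - 2%:R *: T) = \tr Sig + \tr Sigh - 2 * \tr T.
  by rewrite linearB /= mxtraceD mxtraceZ.
lra.
Qed.

End ObjectiveBound.

Local Open Scope classical_set_scope.

Section IntegralBounds.
Context {d : measure_display} {T : measurableType d} {R : realType}.
Variable mu : {measure set T -> \bar R}.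

Lemma integral_lincomb (I : finType) (f : I -> T -> R) (m a : I -> R) :
  (forall i, mu.-integrable setT (fun t => (f i t)%:E)) ->
  (forall i, (\int[mu]_t (f i t)%:E = (m i)%:E)%E) ->
  mu.-integrable setT (fun t => (\sum_i a i * f i t)%:E) /\
  (\int[mu]_t (\sum_i a i * f i t)%:E = (\sum_i a i * m i)%:E)%E.
Proof.
move=> fi fm.
have -> : (fun t => (\sum_i a i * f i t)%:E) = (fun t => \sum_i (a i)%:E * (f i t)%:E)%E.
  by apply/funext => t; rewrite -sumEFin; apply: eq_bigr => i _; rewrite EFinM.
split; first by apply: (integrable_sum measurableT) => i _; exact: integrableZl.
rewrite integral_sum // => [|i]; last exact: integrableZl.
rewrite -sumEFin; apply: eq_bigr => i _.
by rewrite integralZl // fm -EFinM.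
Qed.

Lemma measure_le_integral (A : set T) (f : T -> R) :
  measurable A -> measurable_fun setT f ->
  (forall t, 0 <= f t) -> (forall t, A t -> 1 <= f t) ->
  (mu A <= \int[mu]_t (f t)%:E)%E.
Proof.
move=> mA mf f0 f1; rewrite -[A in mu A]setIT -integral_indic //.
apply: ge0_le_integral => //.
- exact/measurable_EFinP/measurable_indic.
- exact/measurable_EFinP.
move=> t _; rewrite lee_fin indicE.
by have [/set_mem/f1 //|_] := boolP (t \in A).
Qed.

End IntegralBounds.

Section QuadraticExpectation.
Variables (R : realType) (d : nat) (P : probability (d.-tuple R) R).
Variables (mu : 'cV[R]_d) (Sig : 'M[R]_d).
Hypotheses (hmc : has_mean_cov P mu Sig) (pSig : psd Sig).

Let w i (t : d.-tuple R) := tnth t i - mu i 0.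

Lemma integral_centered_coord i :
  P.-integrable setT (fun t => (w i t)%:E) /\ (\int[P]_t (w i t)%:E = 0)%E.
Proof.
have [hi hm] := hmc.1 i.
have -> : (fun t => (w i t)%:E) = ((fun t => (tnth t i)%:E) \- cst (mu i 0)%:E)%E.
  by apply/funext => t; rewrite /w EFinB.
have ci := finite_measure_integrable_cst P (mu i 0) measurableT.
split; first exact: integrableB.
rewrite integralB // hm integral_cst //= probability_setT mule1 subee //.
Qed.

Lemma integral_quadf Z z z0 :
  P.-integrable setT (fun t => (quadf Z z z0 (vec t))%:E) /\
  (\int[P]_t (quadf Z z z0 (vec t))%:E = (\tr (Z *m Sig) + quadf Z z z0 mu)%:E)%E.
Proof.
set c := Z^T *m mu + Z *m mu + 2%:R *: z.
have quadE t : quadf Z z z0 (vec t) =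
    \sum_(p : 'I_d * 'I_d) Z p.1 p.2 * (w p.1 t * w p.2 t) +
    \sum_i c i 0 * w i t + quadf Z z z0 mu.
  rewrite -[vec t](subrKC mu) quadf_shift bil_entries pair_bigA /= mxE.
  by congr (_ + _ + _); apply: eq_bigr => i _; rewrite !mxE.
have [iA eA] := integral_lincomb (fun p : 'I_d * 'I_d => Z p.1 p.2)
  (fun p => (hmc.2 p.1 p.2).1) (fun p => (hmc.2 p.1 p.2).2).
have [iB eB] := integral_lincomb (fun i => c i 0)
  (fun i => (integral_centered_coord i).1) (fun i => (integral_centered_coord i).2).
have iK := finite_measure_integrable_cst P (quadf Z z z0 mu) measurableT.
have -> : (fun t => (quadf Z z z0 (vec t))%:E) =
    ((fun t => (\sum_p Z p.1 p.2 * (w p.1 t * w p.2 t))%:E) \+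
     (fun t => (\sum_i c i 0 * w i t)%:E) \+ cst (quadf Z z z0 mu)%:E)%E.
  by apply/funext => t; rewrite quadE /= !EFinD.
split; first by do 2 apply: integrableD => //.
rewrite !integralD //; last exact: integrableD.
rewrite eA eB integral_cst //= probability_setT mule1.
have -> : \sum_i c i 0 * 0 = 0 by apply: big1 => i _; rewrite mulr0.
rewrite adde0 -EFinD.
congr (_ + _)%:E; rewrite -(pair_bigA _ (fun i j => Z i j * Sig i j)).
apply: eq_bigr => i _; rewrite mxE; apply: eq_bigr => j _.
by rewrite (psd_sym i j pSig).
Qed.

End QuadraticExpectation.

Lemma measurable_dot_vec (R : realType) d (a : 'cV[R]_d) :
  measurable_fun [set: d.-tuple R] (fun t => (a^T *m vec t) 0 0).
Proof.
have -> : (fun t => (a^T *m vec t) 0 0) = (fun t => \sum_(i < d) a i 0 * tnth t i).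
  by apply/funext => t; rewrite mxE; apply: eq_bigr => i _; rewrite !mxE.
apply: measurable_sum => i; apply: measurable_funM => //.
exact: measurable_tnth.
Qed.

Lemma measurable_Theta (R : realType) d J (x : 'I_J -> 'cV[R]_d) :
  measurable (Theta x).
Proof.
have -> : Theta x = \bigcap_(j in [set: 'I_J])
    ((fun t => ((x j)^T *m vec t) 0 0) @^-1` `[0, +oo[).
  apply/seteqP; split=> [t /= xt j _ | t /= xt j] /=; first by rewrite in_itv /= andbT.
  by have := xt j I; rewrite /= in_itv /= andbT.
apply: fin_bigcap_measurable => [|j _]; first exact: finite_finset.
by rewrite -[X in measurable X]setTI; exact: measurable_dot_vec.
Qed.

Local Open Scope ring_scope.

Theorem theorem2 (R : realType) (d J : nat) (x : 'I_J -> 'cV[R]_d) (rho : R)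
    (muh : 'cV[R]_d) (Sigh : 'M[R]_d) :
  0 <= rho -> psd Sigh ->
  (ereal_sup [set P (Theta x) | P in gelbrich_ball rho muh Sigh] <=
   Ustar x rho muh Sigh)%E.
Proof.
move=> _ _; apply/ereal_supP => _ [P [mu [Sig [pSig [hG hmc]]]] <-].
apply/ereal_infP => _ [g [z0 [z [Z [q [Q [lam [feas ->]]]]]]]].
have [g0 [_ [_ [_ [lam0 [B1 [B2 [B3 B4]]]]]]]] := feas.
have [iF eF] := integral_quadf hmc pSig Z z z0.
have mF : measurable_fun setT (fun t => quadf Z z z0 (vec t)).
  by apply/measurable_EFinP; exact: (measurable_int P iF).
apply: le_trans (measure_le_integral P (measurable_Theta x) mF
  (fun t => quadf_ge0 _ B3) (fun t xt => quadf_ge1 B4 lam0 xt)) _.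
by rewrite eF lee_fin moment_le_objective.
Qed.
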